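(* Let $J=JCK(Z,\delta)$. Relative to the $\mathbb Z_2^2$-grading of $\mathrm{Der}(J)$ induced by that of $J$, $\mathrm{Der}(J)_{\bar1}^{[\bar0,\bar0]}=D(Z,Zx)=\{\tilde\eta_a:a\in Z\}$, $\mathrm{Der}(J)_{\bar1}^{[\bar1,\bar0]}=D(w_1,Zx)$, $\mathrm{Der}(J)_{\bar1}^{[\bar0,\bar1]}=D(w_2,Zx)$, $\mathrm{Der}(J)_{\bar1}^{[\bar1,\bar1]}=D(w_3,Zx)$, and $\mathrm{Der}(J)_{\bar1}$ is the direct sum of these components.
   Context: Let $\mathbb F$ be a field of characteristic $\neq 2$, $Z$ a unital commutative associative $\mathbb F$-algebra, and $\delta$ a derivation of $Z$ such that $Z\delta(Z)=Z$ (the $\mathbb F$-span of all products $f\delta(g)$, $f,g\in Z$, is $Z$). The Cheng-Kac Jordan superalgebra $J=JCK(Z,\delta)=J_{\bar0}\oplus J_{\bar1}$ is defined as follows: $J_{\bar0}=Z1\oplus Zw_1\oplus Zw_2\oplus Zw_3$ and $J_{\bar1}=Zx\oplus Zx_1\oplus Zx_2\oplus Zx_3$ are free $Z$-modules of rank 4; $J_{\bar0}$ is the $Z$-algebra $(\mathbb F1\oplus\mathbb Fw_1\oplus\mathbb Fw_2\oplus\mathbb Fw_3)\otimes_{\mathbb F}Z$ with $1$ the identity, $w_1^2=w_2^2=1$, $w_3^2=-1$, $w_iw_j=0$ for $i\ne j$. For $f,g\in Z$ and $i,j\in\{1,2,3\}$ the remaining products are: $f(gx)=(fg)x$, $f(gx_j)=(fg)x_j$,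 $(fw_i)(gx)=(\delta(f)g)x_i$, $(fw_i)(gx_j)=-(fg)x_{i\times j}$, $(fx)(gx)=\delta(f)g-f\delta(g)$, $(fx)(gx_j)=-(fg)w_j$, $(fx_i)(gx)=(fg)w_i$, $(fx_i)(gx_j)=0$, extended by supercommutativity ($ab=(-1)^{|a||b|}ba$), where $x_{1\times2}=-x_{2\times1}=x_3$, $x_{1\times3}=-x_{3\times1}=x_2$, $x_{3\times2}=-x_{2\times3}=x_1$, $x_{i\times i}=0$. $J$ is $\mathbb Z_2^2$-graded by $J^{[\bar0,\bar0]}=Z\oplus Zx$, $J^{[\bar1,\bar0]}=Zw_1\oplus Zx_1$, $J^{[\bar0,\bar1]}=Zw_2\oplus Zx_2$, $J^{[\bar1,\bar1]}=Zw_3\oplus Zx_3$, and $\mathrm{Der}(J)^{\alpha}$ denotes the derivations mapping each $J^{\beta}$ into $J^{\alpha+\beta}$. Derivations are super derivations (homogeneous $d$ with $d(ab)=d(a)b+(-1)^{|d||a|}ad(b)$); $D(a,b)$ is $c\mapsto a(bc)-(-1)^{|a||b|}b(ac)$; $D(A,B)$ denotes the span of $D(a,b)$, $a\in A,b\in B$. For $a\in Z$, $\tilde\eta_a$ is the odd derivation of $J$ with $\tilde\eta_a(Z)=0$, $\tilde\eta_a(x)=a$, $\tilde\eta_a(x_j)=0$ for $j=1,2,3$. *)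

From HB Require Import structures.
From mathcomp Require Import all_boot all_order all_algebra.
Set Implicit Arguments. Unset Strict Implicit. Unset Printing Implicit Defensive.
Import Order.TTheory GRing.Theory Num.Theory.
Local Open Scope ring_scope.

(* The Cheng-Kac Jordan superalgebra JCK(Z, delta), as an F-superalgebra.
   An element is
     e0*1 + e1*w1 + e2*w2 + e3*w3  +  o0*x + o1*x1 + o2*x2 + o3*x3
   with all coefficients in Z. *)
Record JCK (F : fieldType) (Z : comAlgType F) := mkJ {
  e0 : Z; e1 : Z; e2 : Z; e3 : Z; o0 : Z; o1 : Z; o2 : Z; o3 : Z }.

Section CK.
Variables (F : fieldType) (Z : comAlgType F) (delta : Z -> Z).

Local Notation J := (JCK Z).

Definition zeroJ : J := mkJ 0 0 0 0 0 0 0 0.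
Definition addJ (u v : J) : J :=
  mkJ (e0 u + e0 v) (e1 u + e1 v) (e2 u + e2 v) (e3 u + e3 v)
      (o0 u + o0 v) (o1 u + o1 v) (o2 u + o2 v) (o3 u + o3 v).
Definition scaleJ (c : F) (u : J) : J :=
  mkJ (c *: e0 u) (c *: e1 u) (c *: e2 u) (c *: e3 u)
      (c *: o0 u) (c *: o1 u) (c *: o2 u) (c *: o3 u).

Definition jZ  (f : Z) : J := mkJ f 0 0 0 0 0 0 0.
Definition jw1 (f : Z) : J := mkJ 0 f 0 0 0 0 0 0.
Definition jw2 (f : Z) : J := mkJ 0 0 f 0 0 0 0 0.
Definition jw3 (f : Z) : J := mkJ 0 0 0 f 0 0 0 0.
Definition jx  (f : Z) : J := mkJ 0 0 0 0 f 0 0 0.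
Definition jx1 (f : Z) : J := mkJ 0 0 0 0 0 f 0 0.
Definition jx2 (f : Z) : J := mkJ 0 0 0 0 0 0 f 0.
Definition jx3 (f : Z) : J := mkJ 0 0 0 0 0 0 0 f.

(* The product, i.e. the F-bilinear extension of the multiplication table:
   (f1)(g1)=fg, (fw_i)(g1)=fg w_i, w_1^2=w_2^2=1, w_3^2=-1, w_iw_j=0 (i<>j),
   (f)(gx)=fg x, (f)(gx_j)=fg x_j, (fw_i)(gx)=delta(f)g x_i,
   (fw_i)(gx_j)=-fg x_{ixj}, (fx)(gx)=delta(f)g - f delta(g),
   (fx)(gx_j)=-fg w_j, (fx_i)(gx)=fg w_i, (fx_i)(gx_j)=0,
   extended by supercommutativity. *)
(* (even part (a0,a1,a2,a3)) * (odd part (b0,b1,b2,b3)), an odd element *)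
Definition EO (a0 a1 a2 a3 b0 b1 b2 b3 : Z) : Z * Z * Z * Z :=
  (a0 * b0,
   a0 * b1 + delta a1 * b0 - a3 * b2 + a2 * b3,
   a0 * b2 + delta a2 * b0 - a1 * b3 + a3 * b1,
   a0 * b3 + delta a3 * b0 - a1 * b2 + a2 * b1).

Definition mulJ (u v : J) : J :=
  let: (p0, p1, p2, p3) := EO (e0 u) (e1 u) (e2 u) (e3 u) (o0 v) (o1 v) (o2 v) (o3 v) in
  let: (q0, q1, q2, q3) := EO (e0 v) (e1 v) (e2 v) (e3 v) (o0 u) (o1 u) (o2 u) (o3 u) in
  mkJ (e0 u * e0 v + e1 u * e1 v + e2 u * e2 v - e3 u * e3 v
         + (delta (o0 u) * o0 v - o0 u * delta (o0 v)))
      (e0 u * e1 v + e1 u * e0 v + (o1 u * o0 v - o0 u * o1 v))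
      (e0 u * e2 v + e2 u * e0 v + (o2 u * o0 v - o0 u * o2 v))
      (e0 u * e3 v + e3 u * e0 v + (o3 u * o0 v - o0 u * o3 v))
      (p0 + q0) (p1 + q1) (p2 + q2) (p3 + q3).

Definition is_even (u : J) : Prop := u = mkJ (e0 u) (e1 u) (e2 u) (e3 u) 0 0 0 0.
Definition is_odd (u : J) : Prop := u = mkJ 0 0 0 0 (o0 u) (o1 u) (o2 u) (o3 u).

(* Z_2^2 grading: degree g = (g.1, g.2) in Z_2 x Z_2 (true = 1bar).
   J^[0,0] = Z + Zx, J^[1,0] = Zw1 + Zx1, J^[0,1] = Zw2 + Zx2,
   J^[1,1] = Zw3 + Zx3. *)
Definition proj_grade (g : bool * bool) (u : J) : J :=
  match g with
  | (false, false) => mkJ (e0 u) 0 0 0 (o0 u) 0 0 0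
  | (true, false)  => mkJ 0 (e1 u) 0 0 0 (o1 u) 0 0
  | (false, true)  => mkJ 0 0 (e2 u) 0 0 0 (o2 u) 0
  | (true, true)   => mkJ 0 0 0 (e3 u) 0 0 0 (o3 u)
  end.
Definition in_grade (g : bool * bool) (u : J) : Prop := proj_grade g u = u.
Definition gadd (g h : bool * bool) : bool * bool :=
  (xorb g.1 h.1, xorb g.2 h.2).

Definition odd_derivation (d : J -> J) : Prop :=
  [/\ (forall u v, d (addJ u v) = addJ (d u) (d v)),
      (forall (c : F) u, d (scaleJ c u) = scaleJ c (d u)),
      (forall u, is_even u -> is_odd (d u)),
      (forall u, is_odd u -> is_even (d u)) &
      (forall a b,
         (is_even a -> d (mulJ a b) = addJ (mulJ (d a) b) (mulJ a (d b))) /\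
         (is_odd a -> d (mulJ a b) = addJ (mulJ (d a) b) (scaleJ (-1) (mulJ a (d b)))))].

Definition DerOdd_grade (g : bool * bool) (d : J -> J) : Prop :=
  odd_derivation d /\
  forall h u, in_grade h u -> in_grade (gadd g h) (d u).

(* D(a,b) : c |-> a(bc) - (-1)^{|a||b|} b(ac), with pa, pb the parities of a, b *)
Definition Dop (pa pb : bool) (a b : J) (c : J) : J :=
  addJ (mulJ a (mulJ b c))
       (scaleJ (if pa && pb then 1 else -1) (mulJ b (mulJ a c))).

Definition spanF (I : Type) (gen : I -> J -> J) (d : J -> J) : Prop :=
  exists l : seq (F * I),
    forall u, d u = foldr (fun p acc => addJ (scaleJ p.1 (gen p.2 u)) acc) zeroJ l.

Definition D_Z_Zx : (J -> J) -> Prop :=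
  spanF (fun p : Z * Z => Dop false true (jZ p.1) (jx p.2)).
Definition D_w1_Zx : (J -> J) -> Prop := spanF (fun g => Dop false true (jw1 1) (jx g)).
Definition D_w2_Zx : (J -> J) -> Prop := spanF (fun g => Dop false true (jw2 1) (jx g)).
Definition D_w3_Zx : (J -> J) -> Prop := spanF (fun g => Dop false true (jw3 1) (jx g)).

Definition is_eta (a : Z) (d : J -> J) : Prop :=
  [/\ odd_derivation d, (forall f, d (jZ f) = zeroJ), d (jx 1) = jZ a &
      [/\ d (jx1 1) = zeroJ, d (jx2 1) = zeroJ & d (jx3 1) = zeroJ]].

Definition sum4 (D : bool * bool -> J -> J) (u : J) : J :=
  addJ (addJ (D (false, false) u) (D (true, false) u))
       (addJ (D (false, true) u) (D (true, true) u)).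

End CK.

From HB Require Import structures.
From mathcomp Require Import all_boot all_order all_algebra.
From mathcomp Require Import ring.
From Stdlib Require Import FunctionalExtensionality.
Import GRing.Theory.
Local Open Scope ring_scope.

(* We write down four explicit Z-parametrised families of odd derivations,
   eta a, dw1 a, dw2 a, dw3 a, homogeneous of degrees [0,0], [1,0], [0,1],
   [1,1], and check by direct computation that D(f, gx) = eta (g delta(f))
   and D(w_i, ax) = dw_i a; all four families are F-linear in a.
   The heart of the proof is a rigidity lemma: an odd derivation d such that
   d(x), d(x_1), d(x_2), d(x_3) have zero Z-component vanishes.  Evaluating
   the Leibniz rule on products of the generators 1, w_i, x, x_i forces d to
   vanish on them (solving the resulting coordinate equations uses
   char F <> 2); then the restriction of d to Z is a derivation of Z with
   values in ker delta, which is killed by Z delta(Z) = Z.  Since odd derivations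
   form an F-space, subtracting the right combination of the four families
   from an arbitrary odd derivation d yields the decomposition
       d = eta a0 + dw1 a1 + dw2 a2 + dw3 a3,
   with coefficients read off from the Z-components of d on x, x_1, x_2, x_3.
   For a homogeneous d all coefficients but one vanish, which identifies each
   graded component with the image of one family, i.e. with the span
   D(Z, Zx), resp. D(w_i, Zx).  Finally the sum is direct because the grading
   projections recover a homogeneous derivation from a sum of such. *)

Section CKOddDerivations.

Variables (F : fieldType) (Z : comAlgType F) (delta : Z -> Z).
Hypothesis delta_add : forall f g, delta (f + g) = delta f + delta g.
Hypothesis delta_scale : forall (c : F) f, delta (c *: f) = c *: delta f.
Hypothesis delta_mul : forall f g, delta (f * g) = delta f * g + f * delta g.
Hypothesis charF : (2 \notin [pchar F])%N.
Hypothesis ZdZ : forall z : Z, exists l : seq (F * Z * Z),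
  z = \sum_(p <- l) p.1.1 *: (p.1.2 * delta p.2).

Local Notation J := (JCK Z).
Local Notation zero := (zeroJ Z).

Lemma delta0 : delta 0 = 0.
Proof. by apply: (addrI (delta 0)); rewrite -delta_add !addr0. Qed.

Lemma deltaN f : delta (- f) = - delta f.
Proof. by apply/eqP; rewrite -subr_eq0 opprK -delta_add addNr delta0. Qed.

Lemma delta1 : delta 1 = 0.
Proof. by have := delta_mul 1 1; rewrite !(mulr1, mul1r) -{1}[delta 1]addr0 => /addrI <-. Qed.

(* The image c%:A of a scalar in Z, under a name that [ring] treats as an
   atom; rewriting c *: f as scalar c * f lets [ring] handle F-scalars. *)
Definition scalar (c : F) : Z := c%:A.

Lemma scaleZE (c : F) (f : Z) : c *: f = scalar c * f.
Proof. by rewrite mulr_algl. Qed.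

Lemma delta_scalar (c : F) : delta (scalar c) = 0.
Proof. by rewrite /scalar delta_scale delta1 scaler0. Qed.

(* An element annihilated by delta(Z) is zero, since 1 lies in Z delta(Z). *)
Lemma annihilated_by_delta (y : Z) : (forall f, delta f * y = 0) -> y = 0.
Proof.
move=> H; have [l Hl] := ZdZ 1.
rewrite -[y]mul1r Hl mulr_suml big1 // => p _.
by rewrite -scalerAl -mulrA H mulr0 scaler0.
Qed.

Lemma double_eq0 (t : Z) : t + t = 0 -> t = 0.
Proof.
have two_neq0 : (2%:R : F) != 0 by rewrite natf_neq0_pchar pnatE //= inE.
move=> H; rewrite -[t]scale1r -(mulVf two_neq0) -scalerA scaler_nat [t *+ 2]mulr2n H.
by rewrite scaler0.
Qed.

Lemma mulJE a0 a1 a2 a3 b0 b1 b2 b3 c0 c1 c2 c3 d0 d1 d2 d3 :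
  mulJ delta (@mkJ F Z a0 a1 a2 a3 b0 b1 b2 b3) (mkJ c0 c1 c2 c3 d0 d1 d2 d3) =
  mkJ (a0 * c0 + a1 * c1 + a2 * c2 - a3 * c3 + (delta b0 * d0 - b0 * delta d0))
      (a0 * c1 + a1 * c0 + (b1 * d0 - b0 * d1))
      (a0 * c2 + a2 * c0 + (b2 * d0 - b0 * d2))
      (a0 * c3 + a3 * c0 + (b3 * d0 - b0 * d3))
      (a0 * d0 + c0 * b0)
      (a0 * d1 + delta a1 * d0 - a3 * d2 + a2 * d3
         + (c0 * b1 + delta c1 * b0 - c3 * b2 + c2 * b3))
      (a0 * d2 + delta a2 * d0 - a1 * d3 + a3 * d1
         + (c0 * b2 + delta c2 * b0 - c1 * b3 + c3 * b1))
      (a0 * d3 + delta a3 * d0 - a1 * d2 + a2 * d1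
         + (c0 * b3 + delta c3 * b0 - c1 * b2 + c2 * b1)).
Proof. by []. Qed.

Lemma addJE a0 a1 a2 a3 b0 b1 b2 b3 c0 c1 c2 c3 d0 d1 d2 d3 :
  addJ (@mkJ F Z a0 a1 a2 a3 b0 b1 b2 b3) (mkJ c0 c1 c2 c3 d0 d1 d2 d3) =
  mkJ (a0 + c0) (a1 + c1) (a2 + c2) (a3 + c3) (b0 + d0) (b1 + d1) (b2 + d2) (b3 + d3).
Proof. by []. Qed.

Lemma scaleJE c a0 a1 a2 a3 b0 b1 b2 b3 :
  scaleJ c (@mkJ F Z a0 a1 a2 a3 b0 b1 b2 b3) =
  mkJ (c *: a0) (c *: a1) (c *: a2) (c *: a3) (c *: b0) (c *: b1) (c *: b2) (c *: b3).
Proof. by []. Qed.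

Lemma addJ0 (u : J) : addJ u zero = u.
Proof. by case: u => *; rewrite addJE !addr0. Qed.

Lemma add0J (u : J) : addJ zero u = u.
Proof. by case: u => *; rewrite addJE !add0r. Qed.

Lemma evenE {u : J} : is_even u -> exists a0 a1 a2 a3, u = mkJ a0 a1 a2 a3 0 0 0 0.
Proof. by move=> ->; do 4 eexists. Qed.

Lemma oddE {u : J} : is_odd u -> exists b0 b1 b2 b3, u = mkJ 0 0 0 0 b0 b1 b2 b3.
Proof. by move=> ->; do 4 eexists. Qed.

(* eta a is the derivation eta~_a: it kills Z, x_1, x_2, x_3 and sends x to a. *)
Definition eta (a : Z) (u : J) : J :=
  mkJ (o0 u * a) 0 0 0 0 (- (e1 u * a)) (- (e2 u * a)) (- (e3 u * a)).

(* dw_i a is the inner derivation D(w_i, ax), see Dop_wi_x below. *)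
Definition dw1 (a : Z) (u : J) : J :=
  let: mkJ u0 u1 u2 u3 v0 v1 v2 v3 := u in
  mkJ (- (a * v1)) (v0 * delta a - a * delta v0) (- (a * v3)) (- (a * v2))
      (- (a * u1)) (- (a * delta u0)) (- (a * delta u3)) (- (a * delta u2)).

Definition dw2 (a : Z) (u : J) : J :=
  let: mkJ u0 u1 u2 u3 v0 v1 v2 v3 := u in
  mkJ (- (a * v2)) (a * v3) (v0 * delta a - a * delta v0) (a * v1)
      (- (a * u2)) (a * delta u3) (- (a * delta u0)) (a * delta u1).

Definition dw3 (a : Z) (u : J) : J :=
  let: mkJ u0 u1 u2 u3 v0 v1 v2 v3 := u in
  mkJ (a * v3) (- (a * v2)) (a * v1) (v0 * delta a - a * delta v0)
      (a * u3) (- (a * delta u2)) (a * delta u1) (- (a * delta u0)).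

Ltac jnorm := rewrite /Dop /eta /= /jZ /jw1 /jw2 /jw3 /jx /jx1 /jx2 /jx3 /zeroJ;
  rewrite ?(addJE, scaleJE, mulJE) /=.
Ltac dnorm := rewrite ?scaleN1r ?scale1r ?scale0r ?scaleZE;
  rewrite ?(delta_add, deltaN, delta_mul) ?delta0 ?delta1 ?delta_scalar.
Ltac jsolve := jnorm; dnorm; congr mkJ; ring.

(* [from_hyp] closes a coordinate goal X = Y which is, up to ring
   normalisation, plus or minus a hypothesis A = B (or half of it). *)
Lemma eq_from_hyp (k : Z) {A B X Y : Z} : A = B -> X - Y = k * (A - B) -> X = Y.
Proof. by move=> -> /eqP; rewrite subrr mulr0 subr_eq0 => /eqP. Qed.

Ltac from_hyp1 := match goal with
  | H : _ = _ |- _ =>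
      first [apply: (eq_from_hyp 1 H); ring | apply: (eq_from_hyp (-1) H); ring]
  end.
Ltac from_hyp := first [from_hyp1 | apply: double_eq0; from_hyp1].

Lemma Dop_Z_x f g u : Dop delta false true (jZ f) (jx g) u = eta (g * delta f) u.
Proof. by case: u => *; jsolve. Qed.

Lemma Dop_w1_x a u : Dop delta false true (jw1 1) (jx a) u = dw1 a u.
Proof. by case: u => *; jsolve. Qed.

Lemma Dop_w2_x a u : Dop delta false true (jw2 1) (jx a) u = dw2 a u.
Proof. by case: u => *; jsolve. Qed.

Lemma Dop_w3_x a u : Dop delta false true (jw3 1) (jx a) u = dw3 a u.
Proof. by case: u => *; jsolve. Qed.

Ltac odd_derivation_tac := split;
  [ move=> [? ? ? ? ? ? ? ?] [? ? ? ? ? ? ? ?]; jsolve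
  | move=> ? [? ? ? ? ? ? ? ?]; jsolve
  | move=> ? /evenE [? [? [? [? ->]]]]; rewrite /is_odd; jsolve
  | move=> ? /oddE [? [? [? [? ->]]]]; rewrite /is_even; jsolve
  | move=> ? [? ? ? ? ? ? ? ?];
    split => [/evenE | /oddE] [? [? [? [? ->]]]]; jsolve ].

Lemma eta_odd a : odd_derivation delta (eta a). Proof. odd_derivation_tac. Qed.
Lemma dw1_odd a : odd_derivation delta (dw1 a). Proof. odd_derivation_tac. Qed.
Lemma dw2_odd a : odd_derivation delta (dw2 a). Proof. odd_derivation_tac. Qed.
Lemma dw3_odd a : odd_derivation delta (dw3 a). Proof. odd_derivation_tac. Qed.

(* The family of degree g, and the odd generator x, x_1, x_2, x_3 of degree g
   on which its parameter is read off. *)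
Definition family (g : bool * bool) : Z -> J -> J :=
  match g with
  | (false, false) => eta
  | (true, false) => dw1
  | (false, true) => dw2
  | (true, true) => dw3
  end.

Definition xgen (g : bool * bool) : J :=
  match g with
  | (false, false) => jx 1
  | (true, false) => jx1 1
  | (false, true) => jx2 1
  | (true, true) => jx3 1
  end.

Lemma xgen_grade g : in_grade g (xgen g).
Proof. by case: g => [[] []]. Qed.

Lemma family_odd g a : odd_derivation delta (family g a).
Proof. by case: g => [[] []]; [exact: dw3_odd|exact: dw1_odd|exact: dw2_odd|exact: eta_odd]. Qed.

Lemma family_grade g a : DerOdd_grade delta g (family g a).
Proof.
split; first exact: family_odd.
by case: g => [[] []] [[] []] [? ? ? ? ? ? ? ?] <-; rewrite /in_grade /gadd /=; jsolve.
Qed.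

Definition param_linear (G : Z -> J -> J) : Prop :=
  [/\ forall u, G 0 u = zero,
      forall a b u, G (a + b) u = addJ (G a u) (G b u) &
      forall c a u, G (c *: a) u = scaleJ c (G a u)].

Lemma family_linear g : param_linear (family g).
Proof.
by case: g => [[] []]; split=> [[? ? ? ? ? ? ? ?]|? ? [? ? ? ? ? ? ? ?]|? ? [? ? ? ? ? ? ? ?]];
  rewrite /=; jsolve.
Qed.

Lemma odd_derivation_add {d1 d2 : J -> J} :
  odd_derivation delta d1 -> odd_derivation delta d2 ->
  odd_derivation delta (fun u => addJ (d1 u) (d2 u)).
Proof.
case=> [a1 s1 e1 o1 L1] [a2 s2 e2 o2 L2]; split.
- move=> u v; rewrite a1 a2.
  by case: (d1 u) (d1 v) (d2 u) (d2 v) => ? ? ? ? ? ? ? ?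
    [? ? ? ? ? ? ? ?] [? ? ? ? ? ? ? ?] [? ? ? ? ? ? ? ?]; jsolve.
- move=> c u; rewrite s1 s2.
  by case: (d1 u) (d2 u) => ? ? ? ? ? ? ? ? [? ? ? ? ? ? ? ?]; jsolve.
- move=> u /[dup] /e1 /oddE [? [? [? [? ->]]]] /e2 /oddE [? [? [? [? ->]]]].
  by rewrite /is_odd; jsolve.
- move=> u /[dup] /o1 /evenE [? [? [? [? ->]]]] /o2 /evenE [? [? [? [? ->]]]].
  by rewrite /is_even; jsolve.
- move=> a b; split=> H; [rewrite (proj1 (L1 a b) H) (proj1 (L2 a b) H)
                         |rewrite (proj2 (L1 a b) H) (proj2 (L2 a b) H)];
  case: (d1 a) (d2 a) (d1 b) (d2 b) => ? ? ? ? ? ? ? ?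
    [? ? ? ? ? ? ? ?] [? ? ? ? ? ? ? ?] [? ? ? ? ? ? ? ?];
  case: a b {H} => ? ? ? ? ? ? ? ? [? ? ? ? ? ? ? ?]; jsolve.
Qed.

Lemma odd_derivation_scale (c : F) {d : J -> J} :
  odd_derivation delta d -> odd_derivation delta (fun u => scaleJ c (d u)).
Proof.
case=> [a1 s1 e1 o1 L1]; split.
- by move=> u v; rewrite a1; case: (d u) (d v) => ? ? ? ? ? ? ? ? [? ? ? ? ? ? ? ?]; jsolve.
- by move=> k u; rewrite s1; case: (d u) => ? ? ? ? ? ? ? ?; jsolve.
- by move=> u /e1 /oddE [? [? [? [? ->]]]]; rewrite /is_odd; jsolve.
- by move=> u /o1 /evenE [? [? [? [? ->]]]]; rewrite /is_even; jsolve.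
- move=> a b; split=> H; [rewrite (proj1 (L1 a b) H) | rewrite (proj2 (L1 a b) H)];
  case: (d a) (d b) => ? ? ? ? ? ? ? ? [? ? ? ? ? ? ? ?];
  case: a b {H} => ? ? ? ? ? ? ? ? [? ? ? ? ? ? ? ?]; jsolve.
Qed.

Definition Zgen (c : Z -> J) : Prop := forall h, c h = mulJ delta (jZ h) (c 1).

Lemma Zgen_generators :
  [/\ Zgen (@jw1 _ Z), Zgen (@jw2 _ Z), Zgen (@jw3 _ Z), Zgen (@jx _ Z)
    & [/\ Zgen (@jx1 _ Z), Zgen (@jx2 _ Z) & Zgen (@jx3 _ Z)]].
Proof. by split; [..|split] => h; jsolve. Qed.

Section Rigidity.

Variable d : J -> J.
Hypothesis d_odd : odd_derivation delta d.

Lemma der_even {u : J} : is_even u -> is_odd (d u).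
Proof. by case: d_odd => _ _ ev _ _; exact: ev. Qed.

Lemma der_odd {u : J} : is_odd u -> is_even (d u).
Proof. by case: d_odd => _ _ _ od _; exact: od. Qed.

Lemma der_mul_even a b : is_even a ->
  d (mulJ delta a b) = addJ (mulJ delta (d a) b) (mulJ delta a (d b)).
Proof. by case: d_odd => _ _ _ _ /(_ a b) []. Qed.

Lemma der_mul_odd a b : is_odd a ->
  d (mulJ delta a b) = addJ (mulJ delta (d a) b) (scaleJ (-1) (mulJ delta a (d b))).
Proof. by case: d_odd => _ _ _ _ /(_ a b) []. Qed.

Lemma der_zero : d zero = zero.
Proof.
case: d_odd => _ dsc _ _ _.
rewrite -(_ : scaleJ 0 zero = zero); last by jsolve.
by rewrite dsc; case: (d _) => *; jsolve.
Qed.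

Lemma der_one : d (jZ 1) = zero.
Proof.
have := der_mul_even (jZ 1) (jZ 1) (erefl _).
have -> : mulJ delta (jZ 1) (jZ 1) = jZ 1 by jsolve.
have [p0 [p1 [p2 [p3 ->]]]] := oddE (der_even (erefl (jZ 1))).
by jnorm; dnorm; case=> _ _ _ _ E0 E1 E2 E3; congr mkJ; from_hyp.
Qed.

Lemma der_multiple {c : Z -> J} : Zgen c -> d (c 1) = zero ->
  forall f, d (c f) = mulJ delta (d (jZ f)) (c 1).
Proof.
move=> cZ dc1 f; rewrite cZ der_mul_even // dc1.
by case: (d (jZ f)) (c 1) => ? ? ? ? ? ? ? ? [? ? ? ? ? ? ? ?]; jsolve.
Qed.

(* Leibniz on x_i x_j = 0 kills d(x_i) once its Z-component vanishes. *)
Lemma der_xi_vanish :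
  e0 (d (jx1 1)) = 0 -> e0 (d (jx2 1)) = 0 -> e0 (d (jx3 1)) = 0 ->
  [/\ d (jx1 1) = zero, d (jx2 1) = zero & d (jx3 1) = zero].
Proof.
have [v10 [v11 [v12 [v13 Hx1]]]] := evenE (der_odd (erefl (jx1 1))).
have [v20 [v21 [v22 [v23 Hx2]]]] := evenE (der_odd (erefl (jx2 1))).
have [v30 [v31 [v32 [v33 Hx3]]]] := evenE (der_odd (erefl (jx3 1))).
rewrite Hx1 Hx2 Hx3 /= => v10_0 v20_0 v30_0; subst v10 v20 v30.
have R12 := der_mul_odd (jx1 1) (jx2 1) (erefl _).
have R13 := der_mul_odd (jx1 1) (jx3 1) (erefl _).
have R23 := der_mul_odd (jx2 1) (jx3 1) (erefl _).
rewrite (_ : mulJ delta (jx1 1) (jx2 1) = zero) ?der_zero ?Hx1 ?Hx2 in R12; last by jsolve.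
rewrite (_ : mulJ delta (jx1 1) (jx3 1) = zero) ?der_zero ?Hx1 ?Hx3 in R13; last by jsolve.
rewrite (_ : mulJ delta (jx2 1) (jx3 1) = zero) ?der_zero ?Hx2 ?Hx3 in R23; last by jsolve.
move: R12 R13 R23; jnorm; dnorm.
case=> _ _ _ _ _ A1 A2 A3; case=> _ _ _ _ _ B1 B2 B3; case=> _ _ _ _ _ C1 C2 C3.
have v13_0 : v13 = 0 by from_hyp. have v23_0 : v23 = 0 by from_hyp.
have v12_0 : v12 = 0 by from_hyp. have v32_0 : v32 = 0 by from_hyp.
have v21_0 : v21 = 0 by from_hyp. have v31_0 : v31 = 0 by from_hyp.
have v11E : v11 = - v22 by from_hyp. have v22E : v22 = - v33 by from_hyp.
subst v13 v23 v12 v32 v21 v31 v11 v22.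
have v33_0 : v33 = 0 by from_hyp.
by subst v33; rewrite !oppr0.
Qed.

(* Leibniz on x x_i = -w_i and w_i^2 = +-1 shows that d(w_i) lies in Z x_i,
   once d(x_i) = 0 and d(x) has no Z-component. *)
Lemma der_w_in_Zxi :
  d (jx1 1) = zero -> d (jx2 1) = zero -> d (jx3 1) = zero -> e0 (d (jx 1)) = 0 ->
  [/\ exists y, d (jw1 1) = jx1 y, exists y, d (jw2 1) = jx2 y
    & exists y, d (jw3 1) = jx3 y].
Proof.
move=> dx1 dx2 dx3; case: d_odd => _ dsc _ _ _.
have [y10 [y11 [y12 [y13 Hw1]]]] := oddE (der_even (erefl (jw1 1))).
have [y20 [y21 [y22 [y23 Hw2]]]] := oddE (der_even (erefl (jw2 1))).
have [y30 [y31 [y32 [y33 Hw3]]]] := oddE (der_even (erefl (jw3 1))).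
have [z0 [z1 [z2 [z3 Hx]]]] := evenE (der_odd (erefl (jx 1))).
rewrite Hx /= => z0_0; subst z0.
have R1 := der_mul_odd (jx 1) (jx1 1) (erefl _).
have R2 := der_mul_odd (jx 1) (jx2 1) (erefl _).
have R3 := der_mul_odd (jx 1) (jx3 1) (erefl _).
rewrite (_ : mulJ delta (jx 1) (jx1 1) = scaleJ (-1) (jw1 1)) ?dsc ?Hw1 ?Hx ?dx1 in R1;
  last by jsolve.
rewrite (_ : mulJ delta (jx 1) (jx2 1) = scaleJ (-1) (jw2 1)) ?dsc ?Hw2 ?Hx ?dx2 in R2;
  last by jsolve.
rewrite (_ : mulJ delta (jx 1) (jx3 1) = scaleJ (-1) (jw3 1)) ?dsc ?Hw3 ?Hx ?dx3 in R3;
  last by jsolve.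
have [y10_0 y20_0 y30_0] : [/\ y10 = 0, y20 = 0 & y30 = 0].
  by move: R1 R2 R3; jnorm; dnorm; do 3 case=> _ _ _ _ ? _ _ _; split; from_hyp.
have S1 := der_mul_even (jw1 1) (jw1 1) (erefl _).
have S2 := der_mul_even (jw2 1) (jw2 1) (erefl _).
have S3 := der_mul_even (jw3 1) (jw3 1) (erefl _).
rewrite (_ : mulJ delta (jw1 1) (jw1 1) = jZ 1) ?der_one ?Hw1 in S1; last by jsolve.
rewrite (_ : mulJ delta (jw2 1) (jw2 1) = jZ 1) ?der_one ?Hw2 in S2; last by jsolve.
rewrite (_ : mulJ delta (jw3 1) (jw3 1) = scaleJ (-1) (jZ 1)) ?dsc ?der_one ?Hw3 in S3;
  last by jsolve.
have [y12_0 y13_0] : y12 = 0 /\ y13 = 0 by move: S1; jnorm; dnorm; case=> *; split; from_hyp.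
have [y21_0 y23_0] : y21 = 0 /\ y23 = 0 by move: S2; jnorm; dnorm; case=> *; split; from_hyp.
have [y31_0 y32_0] : y31 = 0 /\ y32 = 0 by move: S3; jnorm; dnorm; case=> *; split; from_hyp.
by subst; split; [exists y11 | exists y22 | exists y33].
Qed.

(* Leibniz on w_i x = 0 then kills d(w_i) and d(x). *)
Lemma der_wx_vanish :
  (exists y, d (jw1 1) = jx1 y) -> (exists y, d (jw2 1) = jx2 y) ->
  (exists y, d (jw3 1) = jx3 y) -> e0 (d (jx 1)) = 0 ->
  [/\ d (jw1 1) = zero, d (jw2 1) = zero, d (jw3 1) = zero & d (jx 1) = zero].
Proof.
move=> [y1 Hw1] [y2 Hw2] [y3 Hw3].
have [z0 [z1 [z2 [z3 Hx]]]] := evenE (der_odd (erefl (jx 1))).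
rewrite Hx Hw1 Hw2 Hw3 /= => z0_0; subst z0.
have T1 := der_mul_even (jw1 1) (jx 1) (erefl _).
have T2 := der_mul_even (jw2 1) (jx 1) (erefl _).
have T3 := der_mul_even (jw3 1) (jx 1) (erefl _).
rewrite (_ : mulJ delta (jw1 1) (jx 1) = zero) ?der_zero ?Hw1 ?Hx in T1; last by jsolve.
rewrite (_ : mulJ delta (jw2 1) (jx 1) = zero) ?der_zero ?Hw2 ?Hx in T2; last by jsolve.
rewrite (_ : mulJ delta (jw3 1) (jx 1) = zero) ?der_zero ?Hw3 ?Hx in T3; last by jsolve.
have [y1_0 z1_0] : y1 = 0 /\ z1 = 0 by move: T1; jnorm; dnorm; case=> *; split; from_hyp.
have [y2_0 z2_0] : y2 = 0 /\ z2 = 0 by move: T2; jnorm; dnorm; case=> *; split; from_hyp.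
have [y3_0 z3_0] : y3 = 0 /\ z3 = 0 by move: T3; jnorm; dnorm; case=> *; split; from_hyp.
by subst.
Qed.

Lemma der_Z_shape : exists P0 P1 P2 P3 : Z -> Z,
  forall f, d (jZ f) = mkJ 0 0 0 0 (P0 f) (P1 f) (P2 f) (P3 f).
Proof.
exists (fun f => o0 (d (jZ f))), (fun f => o1 (d (jZ f))),
  (fun f => o2 (d (jZ f))), (fun f => o3 (d (jZ f))) => f.
exact: (der_even (erefl _)).
Qed.

Section VanishingOnGenerators.

Hypotheses (dw1_0 : d (jw1 1) = zero) (dw2_0 : d (jw2 1) = zero)
  (dw3_0 : d (jw3 1) = zero) (dx_0 : d (jx 1) = zero).
Hypotheses (dx1_0 : d (jx1 1) = zero) (dx2_0 : d (jx2 1) = zero)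
  (dx3_0 : d (jx3 1) = zero).

Section ComponentsOnZ.

Variables P0 P1 P2 P3 : Z -> Z.
Hypothesis dZ : forall f, d (jZ f) = mkJ 0 0 0 0 (P0 f) (P1 f) (P2 f) (P3 f).

(* Leibniz on (f w_1)(g x) = (delta(f) g) x_1 and (f w_2)(g x) = (delta(f) g) x_2. *)
Lemma der_Z_relations f g :
  [/\ P1 f * g = 0, P2 f * g = 0, P3 f * g = 0 & f * delta (P0 g) = - P0 (delta f * g)].
Proof.
case: Zgen_generators => gw1 gw2 _ gx [gx1 gx2 _].
have R1 := der_mul_even (jw1 f) (jx g) (erefl _).
have R2 := der_mul_even (jw2 f) (jx g) (erefl _).
rewrite (_ : mulJ delta (jw1 f) (jx g) = jx1 (delta f * g)) in R1; last by jsolve.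
rewrite (_ : mulJ delta (jw2 f) (jx g) = jx2 (delta f * g)) in R2; last by jsolve.
rewrite (der_multiple gx1 dx1_0) (der_multiple gw1 dw1_0) (der_multiple gx dx_0) !dZ in R1.
rewrite (der_multiple gx2 dx2_0) (der_multiple gw2 dw2_0) (der_multiple gx dx_0) !dZ in R2.
by move: R1 R2; jnorm; dnorm; case=> ? ? ? ? ? ? ? ?; case=> *; split; from_hyp.
Qed.

(* Leibniz on (f 1)(g 1) = (fg) 1: P0 is a derivation of Z. *)
Lemma der_Z_leibniz f g : P0 (f * g) = P0 f * g + f * P0 g.
Proof.
have := der_mul_even (jZ f) (jZ g) (erefl _).
rewrite (_ : mulJ delta (jZ f) (jZ g) = jZ (f * g)); last by jsolve.
by rewrite !dZ; jnorm; dnorm; case=> *; from_hyp.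
Qed.

(* P0 is a derivation with values in ker delta that kills delta(Z); since
   Z delta(Z) = Z it vanishes, and so do P1, P2, P3. *)
Lemma der_Z_components_vanish f : d (jZ f) = zero.
Proof.
have P0_at0 : P0 0 = 0.
  by have := dZ 0; rewrite (_ : jZ 0 = zero) // der_zero => /(congr1 (@o0 F Z)) /= <-.
have P0_const g : delta (P0 g) = 0.
  by case: (der_Z_relations 1 g) => _ _ _; rewrite delta1 mul0r P0_at0 oppr0 mul1r.
have P0_delta h : P0 (delta h) = 0.
  case: (der_Z_relations h 1) => _ _ _; rewrite P0_const mulr0 mulr1 => /esym/eqP.
  by rewrite oppr_eq0 => /eqP.
have P0_0 : P0 f = 0.
  apply: annihilated_by_delta => h; case: (der_Z_relations h f) => _ _ _.
  rewrite P0_const mulr0 der_Z_leibniz P0_delta mul0r add0r => /esym/eqP.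
  by rewrite oppr_eq0 => /eqP.
case: (der_Z_relations f 1); rewrite !mulr1 => P1_0 P2_0 P3_0 _.
by rewrite dZ P0_0 P1_0 P2_0 P3_0.
Qed.

End ComponentsOnZ.

Lemma der_Z_vanish f : d (jZ f) = zero.
Proof. by have [P0 [P1 [P2 [P3 dZ]]]] := der_Z_shape; exact: der_Z_components_vanish dZ f. Qed.

(* J is generated as a Z-module by 1, w_i, x, x_i, so d vanishes. *)
Lemma der_vanish u : d u = zero.
Proof.
case: d_odd => dadd _ _ _ _.
case: Zgen_generators => gw1 gw2 gw3 gx [gx1 gx2 gx3].
have vanish c : Zgen c -> d (c 1) = zero -> forall f, d (c f) = zero.
  by move=> cZ c1 f; rewrite (der_multiple cZ c1) der_Z_vanish; case: (c 1) => *; jsolve.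
case: u => u0 u1 u2 u3 v0 v1 v2 v3.
rewrite (_ : mkJ u0 u1 u2 u3 v0 v1 v2 v3 =
  addJ (addJ (addJ (jZ u0) (jw1 u1)) (addJ (jw2 u2) (jw3 u3)))
       (addJ (addJ (jx v0) (jx1 v1)) (addJ (jx2 v2) (jx3 v3)))); last by jsolve.
rewrite !dadd der_Z_vanish (vanish _ gw1 dw1_0) (vanish _ gw2 dw2_0) (vanish _ gw3 dw3_0).
by rewrite (vanish _ gx dx_0) (vanish _ gx1 dx1_0) (vanish _ gx2 dx2_0) (vanish _ gx3 dx3_0) !addJ0.
Qed.

End VanishingOnGenerators.

Lemma rigidity :
  e0 (d (jx 1)) = 0 -> e0 (d (jx1 1)) = 0 -> e0 (d (jx2 1)) = 0 -> e0 (d (jx3 1)) = 0 ->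
  forall u, d u = zero.
Proof.
move=> ex ex1 ex2 ex3.
have [dx1 dx2 dx3] := der_xi_vanish ex1 ex2 ex3.
have [w1x1 w2x2 w3x3] := der_w_in_Zxi dx1 dx2 dx3 ex.
have [dw1_0 dw2_0 dw3_0 dx] := der_wx_vanish w1x1 w2x2 w3x3 ex.
exact: der_vanish.
Qed.

End Rigidity.

(* Every odd derivation d is the sum, over the four degrees g, of the
   family of degree g with parameter coef g d, read off from the Z-component
   of d on the odd generator of degree g. *)
Definition coef (g : bool * bool) (d : J -> J) : Z :=
  match g with
  | (true, false) | (false, true) => - e0 (d (xgen g))
  | _ => e0 (d (xgen g))
  end.

Lemma subJ_eq0 (u v : J) : addJ u (scaleJ (-1) v) = zero -> u = v.
Proof.
case: u v => ? ? ? ? ? ? ? ? [? ? ? ? ? ? ? ?].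
by jnorm; dnorm; case=> *; congr mkJ; from_hyp.
Qed.

(* d minus this sum is an odd derivation satisfying the hypotheses of
   rigidity, hence zero. *)
Lemma decomposition d : odd_derivation delta d ->
  forall u, d u = sum4 (fun g => family g (coef g d)) u.
Proof.
move=> dO.
have sum_odd : odd_derivation delta (sum4 (fun g => family g (coef g d))).
  by apply: odd_derivation_add; apply: odd_derivation_add; exact: family_odd.
have vanish := rigidity _ (odd_derivation_add dO (odd_derivation_scale (-1) sum_odd)).
move=> u; apply: subJ_eq0; apply: (vanish _ _ _ _ u); rewrite /sum4 /=; dnorm; ring.
Qed.

Lemma e0_homogeneous k (w : J) : in_grade k w -> k != (false, false) -> e0 w = 0.
Proof. by case: k => [[] []]; case: w => ? ? ? ? ? ? ? ? <-. Qed.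

(* A derivation of degree g maps the odd generator of degree h <> g outside
   J^[0,0], so its coefficient of degree h vanishes. *)
Lemma coef_homogeneous {g h : bool * bool} {d : J -> J} :
  DerOdd_grade delta g d -> h != g -> coef h d = 0.
Proof.
move=> [_ dg] hg.
have e0_0 : e0 (d (xgen h)) = 0.
  apply: e0_homogeneous (dg h _ (xgen_grade h)) _.
  by clear dg; move: hg; case: g h => [[] []] [[] []].
by case: h e0_0 {hg} => [[] []] /= e0_0; rewrite /coef /= e0_0 ?oppr0.
Qed.

Lemma sum4_single (D : bool * bool -> J -> J) g u :
  (forall h, h != g -> D h u = zero) -> sum4 D u = D g u.
Proof.
rewrite /sum4; case: g => [[] []] D0;
  by rewrite ?(D0 (false, false) isT) ?(D0 (true, false) isT)
          ?(D0 (false, true) isT) ?(D0 (true, true) isT) ?addJ0 ?add0J.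
Qed.

Lemma homogeneous_family g d : DerOdd_grade delta g d ->
  forall u, d u = family g (coef g d) u.
Proof.
move=> dg u; rewrite (decomposition _ (proj1 dg)) (sum4_single _ g) // => h hg.
by rewrite (coef_homogeneous dg hg); case: (family_linear h) => ->.
Qed.

Lemma graded_iff_family g d :
  DerOdd_grade delta g d <-> exists a, forall u, d u = family g a u.
Proof.
split=> [dg | [a da]]; first by exists (coef g d); exact: homogeneous_family.
by rewrite (functional_extensionality _ _ da); exact: family_grade.
Qed.

Lemma spanF_ext {I : Type} {g1 g2 : I -> J -> J} {d : J -> J} :
  (forall i u, g1 i u = g2 i u) -> spanF g1 d <-> spanF g2 d.
Proof.
move=> E; split=> -[l Hl]; exists l => u; rewrite Hl;
  by elim: l {Hl} => [|p l IH] //=; rewrite E IH.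
Qed.

Lemma span_param_linear {I : Type} {G : Z -> J -> J} {h : I -> Z} {d : J -> J} :
  param_linear G ->
  (forall a, exists l : seq (F * I), a = \sum_(p <- l) p.1 *: h p.2) ->
  spanF (fun i => G (h i)) d <-> exists a, forall u, d u = G a u.
Proof.
move=> [G0 GD GZ] h_span.
have foldrE (l : seq (F * I)) u :
    foldr (fun p acc => addJ (scaleJ p.1 (G (h p.2) u)) acc) zero l =
    G (\sum_(p <- l) p.1 *: h p.2) u.
  by elim: l => [|p l IH] /=; rewrite ?big_nil ?G0 // big_cons GD GZ IH.
split=> [[l dl] | [a da]].
  by exists (\sum_(p <- l) p.1 *: h p.2) => u; rewrite dl foldrE.
by have [l al] := h_span a; exists l => u; rewrite da foldrE -al.
Qed.

Definition inner_span (g : bool * bool) : (J -> J) -> Prop :=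
  match g with
  | (false, false) => D_Z_Zx delta
  | (true, false) => D_w1_Zx delta
  | (false, true) => D_w2_Zx delta
  | (true, true) => D_w3_Zx delta
  end.

(* D(Z, Zx) is the image of eta because Z delta(Z) = Z; D(w_i, Zx) is the
   image of dw_i. *)
Lemma inner_span_family g d :
  inner_span g d <-> exists a, forall u, d u = family g a u.
Proof.
have id_span (a : Z) : exists l : seq (F * Z), a = \sum_(p <- l) p.1 *: id p.2.
  by exists [:: (1, a)]; rewrite big_seq1 scale1r.
case: g => [[] []] /=.
- rewrite /D_w3_Zx (spanF_ext (g2 := dw3)); last by move=> ? ?; exact: Dop_w3_x.
  exact: (span_param_linear (family_linear (true, true)) id_span).
- rewrite /D_w1_Zx (spanF_ext (g2 := dw1)); last by move=> ? ?; exact: Dop_w1_x.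
  exact: (span_param_linear (family_linear (true, false)) id_span).
- rewrite /D_w2_Zx (spanF_ext (g2 := dw2)); last by move=> ? ?; exact: Dop_w2_x.
  exact: (span_param_linear (family_linear (false, true)) id_span).
- rewrite /D_Z_Zx (spanF_ext (g2 := fun p : Z * Z => eta (p.2 * delta p.1)));
    last by move=> ? ?; exact: Dop_Z_x.
  apply: (span_param_linear (family_linear (false, false))) => a.
  have [l al] := ZdZ a.
  by exists [seq (p.1.1, (p.2, p.1.2)) | p <- l]; rewrite big_map.
Qed.

Lemma graded_component g d : DerOdd_grade delta g d <-> inner_span g d.
Proof. exact: (iff_trans (graded_iff_family g d) (iff_sym (inner_span_family g d))). Qed.

Lemma is_eta_family d : (exists a, is_eta delta a d) <-> exists a, forall u, d u = eta a u.
Proof.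
split=> [[a [dO _ _ [dx1 dx2 dx3]]] | [a da]].
  have coef0 h : h != (false, false) -> coef h d = 0.
    by case: h => [[] []] //= _; rewrite /coef /= ?dx1 ?dx2 ?dx3 ?oppr0.
  exists (coef (false, false) d) => u.
  rewrite (decomposition _ dO) (sum4_single _ (false, false)) // => h /coef0 ->.
  by case: (family_linear h) => ->.
exists a; rewrite (functional_extensionality _ _ da).
by split; [exact: eta_odd | move=> f; jsolve | jsolve | split; jsolve].
Qed.

Lemma D_Z_Zx_is_eta d : D_Z_Zx delta d <-> exists a, is_eta delta a d.
Proof.
exact: (iff_trans (inner_span_family (false, false) d) (iff_sym (is_eta_family d))).
Qed.

Lemma proj_grade_add k (u v : J) :
  proj_grade k (addJ u v) = addJ (proj_grade k u) (proj_grade k v).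
Proof.
by case: k => [[] []]; case: u v => ? ? ? ? ? ? ? ? [? ? ? ? ? ? ? ?]; rewrite /addJ /= ?addr0.
Qed.

Lemma proj_grade_homogeneous k {k' : bool * bool} {w : J} :
  in_grade k' w -> proj_grade k w = if k' == k then w else zero.
Proof. by case: k k' => [[] []] [[] []]; case: w => ? ? ? ? ? ? ? ? <-. Qed.

Lemma proj_grade_in k (u : J) : in_grade k (proj_grade k u).
Proof. by case: k => [[] []]. Qed.

Lemma sum4_proj_grade (u : J) : u = sum4 (@proj_grade F Z) u.
Proof. by case: u => ? ? ? ? ? ? ? ?; rewrite /sum4 /addJ /= ?addr0 ?add0r. Qed.

(* The sum of the homogeneous components is direct: projecting a relation
   sum4 D = 0 on J^(g+h) isolates D g on J^h. *)
Lemma sum4_direct (D : bool * bool -> J -> J) :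
  (forall g, DerOdd_grade delta g (D g)) -> (forall u, sum4 D u = zero) ->
  forall g u, D g u = zero.
Proof.
move=> DG D0.
have on_homogeneous g h v : in_grade h v -> D g v = zero.
  move=> hv; have := congr1 (proj_grade (gadd g h)) (D0 v).
  rewrite /sum4 !proj_grade_add.
  rewrite (proj_grade_homogeneous _ (proj2 (DG (false, false)) _ _ hv)).
  rewrite (proj_grade_homogeneous _ (proj2 (DG (true, false)) _ _ hv)).
  rewrite (proj_grade_homogeneous _ (proj2 (DG (false, true)) _ _ hv)).
  rewrite (proj_grade_homogeneous _ (proj2 (DG (true, true)) _ _ hv)).
  by case: g h {hv} => [[] []] [[] []] /=; rewrite ?addJ0 ?add0J.
move=> g u; case: (DG g) => -[dadd _ _ _ _] _.
by rewrite (sum4_proj_grade u) /sum4 !dadd !(on_homogeneous g _ _ (proj_grade_in _ _)) !addJ0.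
Qed.

End CKOddDerivations.

Theorem proposition4p3
  (F : fieldType) (Z : comAlgType F) (delta : Z -> Z)
  (charF : (2 \notin [pchar F])%N)
  (delta_add : forall f g, delta (f + g) = delta f + delta g)
  (delta_scale : forall (c : F) f, delta (c *: f) = c *: delta f)
  (delta_mul : forall f g, delta (f * g) = delta f * g + f * delta g)
  (ZdZ : forall z : Z, exists l : seq (F * Z * Z),
           z = \sum_(p <- l) p.1.1 *: (p.1.2 * delta p.2)) :
  (* Der(J)_1^[0,0] = D(Z, Zx) = { eta~_a : a in Z } *)
  (forall d : JCK Z -> JCK Z,
     (DerOdd_grade delta (false, false) d <-> D_Z_Zx delta d) /\
     (D_Z_Zx delta d <-> exists a : Z, is_eta delta a d)) /\
  (* Der(J)_1^[1,0] = D(w1, Zx), etc. *)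
  (forall d : JCK Z -> JCK Z, DerOdd_grade delta (true, false) d <-> D_w1_Zx delta d) /\
  (forall d : JCK Z -> JCK Z, DerOdd_grade delta (false, true) d <-> D_w2_Zx delta d) /\
  (forall d : JCK Z -> JCK Z, DerOdd_grade delta (true, true) d <-> D_w3_Zx delta d) /\
  (* Der(J)_1 is the direct sum of the four components *)
  (forall d : JCK Z -> JCK Z, odd_derivation delta d ->
     exists D : bool * bool -> JCK Z -> JCK Z,
       (forall g, DerOdd_grade delta g (D g)) /\ (forall u, d u = sum4 D u)) /\
  (forall D : bool * bool -> JCK Z -> JCK Z,
     (forall g, DerOdd_grade delta g (D g)) ->
     (forall u, sum4 D u = zeroJ Z) ->
     forall g u, D g u = zeroJ Z).
Proof.
have component := @graded_component _ _ _ delta_add delta_scale delta_mul charF ZdZ.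
split; [|split; [|split; [|split; [|split]]]].
- move=> d; split; first exact: (component (false, false)).
  exact: (@D_Z_Zx_is_eta _ _ _ delta_add delta_scale delta_mul charF ZdZ).
- exact: (component (true, false)).
- exact: (component (false, true)).
- exact: (component (true, true)).
- move=> d dO; exists (fun g => @family _ _ delta g (@coef _ _ g d)); split.
  + by move=> g; exact: family_grade.
  + exact: decomposition.
- exact: sum4_direct.
Qed.
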